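(* In the quantum group $U_q(\mathfrak{sl}_n(\mathbb{C}))$ (with $q\in\mathbb{C}^\times$, $q\neq\pm1$), the elements $E_{i,j}$ defined below satisfy $E_{i,i+1}=e_i$ and $E_{i+1,i}=f_i$ for $i=1,\dots,n-1$, and $E_{i,j}=E_{i,k}E_{k,j}-qE_{k,j}E_{i,k}$ for $1\le i<k<j\le n$, and $E_{i,j}=E_{i,k}E_{k,j}-q^{-1}E_{k,j}E_{i,k}$ for $n\ge i>k>j\ge 1$.
   Context: $U_q(\mathfrak{sl}_n(\mathbb{C}))$ is the unital associative $\mathbb{C}$-algebra generated by $e_i,f_i,k_i,k_i^{-1}$ ($1\le i\le n-1$) with relations $k_ik_i^{-1}=k_i^{-1}k_i=1$, $k_ik_j=k_jk_i$, $k_ie_jk_i^{-1}=q^{a_{ij}}e_j$, $k_if_jk_i^{-1}=q^{-a_{ij}}f_j$, $e_if_j-f_je_i=\delta_{ij}\frac{k_i-k_i^{-1}}{q-q^{-1}}$, and $e_i^2e_j-(q+q^{-1})e_ie_je_i+e_je_i^2=0$, $f_i^2f_j-(q+q^{-1})f_if_jf_i+f_jf_i^2=0$ for $|i-j|=1$, $e_ie_j=e_je_i$, $f_if_j=f_jf_i$ for $|i-j|>1$; here $a_{ii}=2$, $a_{ij}=-1$ if $|i-j|=1$, $a_{ij}=0$ if $|i-j|>1$. There are algebra automorphisms $T_1,\dots,T_{n-1}$ of $U_q(\mathfrak{sl}_n(\mathbb{C}))$ (satisfying the braid relations) determined by $T_i(e_i)=-f_ik_i^{-1}$, $T_i(k_i)=k_i^{-1}$,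 $T_i(f_i)=-k_ie_i$; for $|i-j|=1$: $T_i(e_j)=e_ie_j-qe_je_i$, $T_i(k_j)=k_ik_j$, $T_i(f_j)=f_jf_i-q^{-1}f_if_j$; for $|i-j|>1$: $T_i(e_j)=e_j$, $T_i(k_j)=k_j$, $T_i(f_j)=f_j$. For $1\le i<j\le n$ let $T_{w_{i,j}}=(T_1T_2\cdots T_{n-1})(T_1\cdots T_{n-2})\cdots(T_1\cdots T_{n-i+1})(T_1\cdots T_{j-i-1})$ (there are $i-1$ blocks of the form $T_1\cdots T_{n-l}$, $l=1,\dots,i-1$, followed by $T_1\cdots T_{j-i-1}$, which is empty when $j=i+1$), and define $E_{i,j}=T_{w_{i,j}}(e_{j-i})$ and $E_{j,i}=T_{w_{i,j}}(f_{j-i})$. *)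

From HB Require Import structures.
From mathcomp Require Import all_boot all_order all_algebra.
From mathcomp Require Import reals complex.
Set Implicit Arguments. Unset Strict Implicit. Unset Printing Implicit Defensive.
Import Order.TTheory GRing.Theory Num.Theory.
Local Open Scope ring_scope.

(* Generators are indexed by nat; only indices 1 <= i <= n-1 matter. *)

Definition cartan (i j : nat) : int :=
  if i == j then 2%:Z
  else if (i == j.+1) || (j == i.+1) then - 1%:Z else 0%:Z.

Definition adjacent (i j : nat) : bool := (i == j.+1) || (j == i.+1).
Definition distant (i j : nat) : bool := (i.+1 < j)%N || (j.+1 < i)%N.
Definition in_range (n i : nat) : bool := (1 <= i)%N && (i <= n.-1)%N.

Definition Uq_relations (F : fieldType) (A : algType F) (n : nat) (q : F)
    (e f k kinv : nat -> A) : Prop :=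
  forall i j, in_range n i -> in_range n j ->
  [/\ k i * kinv i = 1, kinv i * k i = 1 & k i * k j = k j * k i] /\
  [/\ k i * e j * kinv i = (q ^ cartan i j) *: e j,
      k i * f j * kinv i = (q ^ (- cartan i j)) *: f j,
      e i * f j - f j * e i =
        (if i == j then (q - q^-1)^-1 *: (k i - kinv i) else 0),
      (adjacent i j ->
        e i ^+ 2 * e j - (q + q^-1) *: (e i * e j * e i) + e j * e i ^+ 2 = 0
        /\ f i ^+ 2 * f j - (q + q^-1) *: (f i * f j * f i) + f j * f i ^+ 2 = 0)
    & (distant i j -> e i * e j = e j * e i /\ f i * f j = f j * f i)].

Definition Lusztig_T (F : fieldType) (A : algType F) (n : nat) (q : F)
    (e f k kinv : nat -> A) (T : nat -> {lrmorphism A -> A}) : Prop :=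
  forall i j, in_range n i -> in_range n j ->
  [/\ (i = j -> [/\ T i (e i) = - (f i * kinv i), T i (k i) = kinv i
                 & T i (f i) = - (k i * e i)]),
      (adjacent i j -> [/\ T i (e j) = e i * e j - q *: (e j * e i),
                          T i (k j) = k i * k j
                        & T i (f j) = f j * f i - q^-1 *: (f i * f j)])
    & (distant i j -> [/\ T i (e j) = e j, T i (k j) = k j & T i (f j) = f j])].

(* The reduced word of w_{i,j}:
   (T_1...T_{n-1})(T_1...T_{n-2})...(T_1...T_{n-i+1})(T_1...T_{j-i-1}). *)
Definition word_w (n i j : nat) : seq nat :=
  flatten [seq iota 1 (n - l) | l <- iota 1 (i - 1)] ++ iota 1 (j - i - 1).

Definition Tword (F : fieldType) (A : algType F) (T : nat -> {lrmorphism A -> A})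
    (w : seq nat) (x : A) : A :=
  foldr (fun a y => T a y) x w.

Definition Eroot (F : fieldType) (A : algType F) (n : nat)
    (e f : nat -> A) (T : nat -> {lrmorphism A -> A}) (i j : nat) : A :=
  if (i < j)%N then Tword T (word_w n i j) (e (j - i)%N)
  else Tword T (word_w n j i) (f (i - j)%N).

From HB Require Import structures.
From mathcomp Require Import all_boot all_order all_algebra.
From mathcomp Require Import reals complex.
From mathcomp Require Import ring zify.
Import Order.TTheory GRing.Theory Num.Theory.
Local Open Scope ring_scope.
Set Implicit Arguments. Unset Strict Implicit. Unset Printing Implicit Defensive.

(* Write [x, y]_c for x y - c y x.  Along the reduced word of w_{i,j},
   E_{i,j} unfolds to the nested q-commutator
   [e_i, [e_{i+1}, ..., [e_{j-2}, e_{j-1}]_q ...]_q]_q: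
   T_b fixes e_a for |a - b| > 1, prepends e_b to a chain starting at e_{b+1},
   and the blocks T_1 ... T_m shift a chain up by one index because
   T_a T_{a+1} e_a = e_{a+1}, a direct computation in the relations of
   U_q(sl_n).  The same holds for f with q^-1 and the factors swapped.  As
   [[x, y]_c, z]_c = [x, [y, z]_c]_c whenever x and z commute, and generators
   with distant indices commute, such a chain splits at any interior index,
   which is the stated recursion. *)

Section NestedBrackets.

Variables (A : pzRingType) (br : A -> A -> A).
Hypothesis brA : forall x y z, GRing.comm x z -> br (br x y) z = br x (br y z).
Hypothesis comm_br :
  forall x y z, GRing.comm x y -> GRing.comm x z -> GRing.comm x (br y z).

Fixpoint nest (g : nat -> A) (a l : nat) : A :=
  if l is l'.+1 then br (g a) (nest g a.+1 l') else g a.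

Lemma nest_morph (phi : A -> A) (g h : nat -> A) a l :
    {morph phi : x y / br x y} ->
    (forall i, (a <= i <= a + l)%N -> phi (g i) = h i) ->
  phi (nest g a l) = nest h a l.
Proof.
move=> phi_br; elim: l a => [|l IHl] a gh /=; first by apply: gh; lia.
by rewrite phi_br gh ?IHl // => [i ai|]; [apply: gh|]; lia.
Qed.

Lemma nestS (g : nat -> A) a l : nest (g \o succn) a l = nest g a.+1 l.
Proof. by elim: l a => //= l IHl a; rewrite IHl. Qed.

Lemma comm_nest (x : A) g a l :
  (forall i, (a <= i <= a + l)%N -> GRing.comm x (g i)) -> GRing.comm x (nest g a l).
Proof.
elim: l a => [|l IHl] a xg /=; first by apply: xg; lia.
by apply: comm_br; [apply: xg | apply: IHl => i ai; apply: xg]; lia.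
Qed.

Lemma nest_split g a l1 l2 :
    (forall i j, (a <= i)%N -> (i.+1 < j)%N -> (j <= a + (l1 + l2).+1)%N ->
       GRing.comm (g i) (g j)) ->
  nest g a (l1 + l2).+1 = br (nest g a l1) (nest g (a + l1).+1 l2).
Proof.
elim: l1 a => [|l1 IHl1] a gc; first by rewrite add0n addn0.
rewrite addSn -[nest g a _]/(br (g a) (nest g a.+1 (l1 + l2).+1)).
rewrite IHl1 => [|i j ai ij ja]; last by apply: gc; lia.
rewrite brA -?addSnnS //; apply: comm_nest => i ai; apply: gc; lia.
Qed.

End NestedBrackets.

Section BraidWordAction.

Variables (F : fieldType) (A : algType F) (T : nat -> {lrmorphism A -> A}).

Lemma Tword_cat w1 w2 x : Tword T (w1 ++ w2) x = Tword T w1 (Tword T w2 x).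
Proof. exact: foldr_cat. Qed.

Lemma Tword_fixed w x : (forall b, b \in w -> T b x = x) -> Tword T w x = x.
Proof.
elim: w => //= b w IHw Tx.
by rewrite IHw => [|c cw]; apply: Tx; rewrite inE ?eqxx ?cw ?orbT.
Qed.

Lemma Tword_morph (br : A -> A -> A) w :
  (forall b, {morph T b : x y / br x y}) -> {morph Tword T w : x y / br x y}.
Proof. by move=> T_br x y; elim: w => //= b w ->; rewrite T_br. Qed.

Variables (br : A -> A -> A) (n : nat) (g : nat -> A).
Hypothesis brA : forall x y z, GRing.comm x z -> br (br x y) z = br x (br y z).
Hypothesis comm_br :
  forall x y z, GRing.comm x y -> GRing.comm x z -> GRing.comm x (br y z).
Hypothesis T_br : forall b, {morph T b : x y / br x y}.
Hypothesis g_comm : forall i j,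
  in_range n i -> in_range n j -> distant i j -> GRing.comm (g i) (g j).
Hypothesis T_g_distant : forall b a,
  in_range n b -> in_range n a -> distant b a -> T b (g a) = g a.
Hypothesis T_g_succ : forall a,
  in_range n a -> in_range n a.+1 -> T a (g a.+1) = br (g a) (g a.+1).
Hypothesis T_T_g : forall a,
  in_range n a -> in_range n a.+1 -> T a (T a.+1 (g a)) = g a.+1.

Lemma Tword_iota1 m a : (1 <= a)%N -> (a < m)%N -> (m <= n.-1)%N ->
  Tword T (iota 1 m) (g a) = g a.+1.
Proof.
move=> a1 am mn; have -> : m = (a.-1 + (2 + (m - a.+1)))%N by lia.
have fixed b c : (b + 1 < c \/ c + 1 < b)%N -> (1 <= b)%N -> (b <= n.-1)%N ->
    (1 <= c)%N -> (c <= n.-1)%N -> T b (g c) = g c.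
  by move=> bc *; apply: T_g_distant; rewrite /in_range /distant; lia.
rewrite iotaD iotaD !Tword_cat; have -> : (1 + a.-1)%N = a by lia.
rewrite (@Tword_fixed (iota (a + 2) _) (g a)) => [|b]; last first.
  by rewrite mem_iota => bw; apply: fixed; lia.
rewrite /= T_T_g ?Tword_fixed // ?/in_range; try lia.
by move=> b; rewrite mem_iota => bw; apply: fixed; lia.
Qed.

Lemma T_nest b m : (1 <= b)%N -> (b + m.+1 <= n.-1)%N ->
  T b (nest br g b.+1 m) = nest br g b m.+1.
Proof.
move=> b1 bm; have [rb rb1] : in_range n b /\ in_range n b.+1.
  by rewrite /in_range; lia.
case: m bm => [|m] bm; first exact: T_g_succ.
rewrite /= T_br T_g_succ // (nest_morph (h := g) (T_br b)) => [|i bi]; last first.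
  by apply: T_g_distant; rewrite /in_range /distant; lia.
rewrite brA //; apply: comm_nest => // i bi.
by apply: g_comm; rewrite /in_range /distant; lia.
Qed.

Lemma Tword_iota_nest b m : (1 <= b)%N -> (b + m <= n.-1)%N ->
  Tword T (iota b m) (g (b + m)) = nest br g b m.
Proof.
elim: m b => [|m IHm] b b1 bm /=; first by rewrite addn0.
by rewrite -addSnnS IHm ?T_nest //; lia.
Qed.

Lemma Tword_iota1_nest m a l : (1 <= a)%N -> (a + l < m)%N -> (m <= n.-1)%N ->
  Tword T (iota 1 m) (nest br g a l) = nest br g a.+1 l.
Proof.
move=> a1 alm mn; rewrite -nestS; apply: nest_morph => [|i ai].
  exact: Tword_morph.
by apply: Tword_iota1; lia.
Qed.

Lemma Tword_flatten_nest p a l : (1 <= a)%N -> (a + p + l <= n.-1)%N ->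
  Tword T (flatten [seq iota 1 (n - j) | j <- iota 1 p]) (nest br g a l)
    = nest br g (a + p) l.
Proof.
elim: p a => [|p IHp] a a1 apl; first by rewrite addn0.
rewrite -[p.+1]addn1 iotaD map_cat flatten_cat Tword_cat /= cats0.
by rewrite Tword_iota1_nest ?IHp ?addSnnS ?addn1 //; lia.
Qed.

Lemma Tword_word_w i j : (1 <= i)%N -> (i < j)%N -> (j <= n)%N ->
  Tword T (word_w n i j) (g (j - i)) = nest br g i (j - i - 1).
Proof.
move=> i1 ij jn; rewrite Tword_cat.
have -> : g (j - i) = g (1 + (j - i - 1)) by congr g; lia.
rewrite Tword_iota_nest ?Tword_flatten_nest; try lia.
by congr nest; lia.
Qed.

End BraidWordAction.

Section QCommutator.

Variables (R : comPzRingType) (A : algType R).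

Definition qcomm (c : R) (x y : A) : A := x * y - c *: (y * x).

Lemma qcommA c x y z :
  GRing.comm x z -> qcomm c (qcomm c x y) z = qcomm c x (qcomm c y z).
Proof.
move=> xz; rewrite /qcomm !(mulrBl, mulrBr) -!(scalerAl, scalerAr) !scalerBr !scalerA.
rewrite !mulrA -[y * x * z]mulrA xz !mulrA [c * c]mulrC.
by rewrite !opprD !opprK addrACA.
Qed.

Lemma comm_qcomm c x y z :
  GRing.comm x y -> GRing.comm x z -> GRing.comm x (qcomm c y z).
Proof.
move=> xy xz; apply: commrB; first exact: commrM.
by rewrite /GRing.comm -scalerAl -scalerAr (commrM xz xy).
Qed.

Lemma rmorph_qcomm (phi : {lrmorphism A -> A}) c : {morph phi : x y / qcomm c x y}.
Proof.
by move=> x y; rewrite /qcomm rmorphB rmorphM -[phi y * _]rmorphM -linearZ.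
Qed.

Lemma weight_mul (u x y : A) (a b : R) :
  u * x = a *: (x * u) -> u * y = b *: (y * u) -> u * (x * y) = (a * b) *: (x * y * u).
Proof.
by move=> ux uy; rewrite mulrA ux -scalerAl -[x * u * y]mulrA uy -scalerAr scalerA mulrA.
Qed.

Lemma weight_qcomm (u x y : A) (a b c : R) :
    u * x = a *: (x * u) -> u * y = b *: (y * u) ->
  u * qcomm c x y = (a * b) *: (qcomm c x y * u).
Proof.
move=> ux uy; rewrite /qcomm mulrBr -scalerAr (weight_mul ux uy) (weight_mul uy ux).
by rewrite mulrBl -scalerAl scalerBr !scalerA [c * _]mulrC [b * a]mulrC.
Qed.

Lemma commutator_qcomm_l c x y z :
    GRing.comm y z ->
  qcomm c x y * z - z * qcomm c x y = qcomm c (x * z - z * x) y.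
Proof.
move=> yz; rewrite /qcomm !(mulrBl, mulrBr) -!(scalerAl, scalerAr) !mulrA.
rewrite -[x * y * z]mulrA yz !mulrA scalerBr.
by rewrite !opprD !opprK addrACA.
Qed.

Lemma commutator_qcomm_r c x y z :
    GRing.comm z x ->
  z * qcomm c x y - qcomm c x y * z = qcomm c x (z * y - y * z).
Proof.
move=> zx; rewrite /qcomm !(mulrBl, mulrBr) -!(scalerAl, scalerAr) !mulrA zx.
rewrite -[y * x * z]mulrA -zx !mulrA scalerBr.
by rewrite !opprD !opprK addrACA.
Qed.

End QCommutator.

Section SimpleRootIdentities.

Variables (F : fieldType) (A : algType F) (q : F) (K Ki : A).
Hypotheses (q_neq0 : q != 0) (q2_neq1 : q ^+ 2 != 1).
Hypotheses (KKi : K * Ki = 1) (KiK : Ki * K = 1).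

Let qq1_neq0 : q * q - 1 != 0. Proof. by rewrite subr_eq0 -expr2. Qed.

Lemma conj_weight (x : A) (c : F) : K * x * Ki = c *: x -> K * x = c *: (x * K).
Proof. by move=> Kx; rewrite -[K * x]mulr1 -KiK mulrA Kx scalerAl. Qed.

Lemma conj_weightV (x : A) (c : F) :
  c != 0 -> K * x * Ki = c *: x -> Ki * x = c^-1 *: (x * Ki).
Proof.
move=> c0 Kx; have <- : c *: (Ki * x) = x * Ki.
  by rewrite scalerAr -Kx !mulrA KiK mul1r.
by rewrite scalerA mulVf // scale1r.
Qed.

Lemma qcomm_qcomm_FKi (E1 E2 F1 : A) :
    K * E1 * Ki = q ^+ 2 *: E1 -> K * E2 * Ki = q^-1 *: E2 ->
    E1 * F1 - F1 * E1 = (q - q^-1)^-1 *: (K - Ki) -> E2 * F1 - F1 * E2 = 0 ->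
  qcomm q (qcomm q E1 E2) (- (F1 * Ki)) = E2.
Proof.
move=> KE1 KE2 E1F1 E2F1; set X := qcomm q E1 E2.
have q2_neq0 : q ^+ 2 != 0 by rewrite expf_neq0.
have KiX : Ki * X = q^-1 *: (X * Ki).
  rewrite (weight_qcomm _ (conj_weightV q2_neq0 KE1) (conj_weightV _ KE2)) ?invr_neq0 //.
  by congr (_ *: _); field; rewrite q_neq0 ?qq1_neq0 ?oner_neq0.
have XF1 : X * F1 - F1 * X = - (E2 * K).
  rewrite commutator_qcomm_l; last exact/subr0_eq.
  rewrite E1F1 /qcomm -scalerAl -scalerAr mulrBl mulrBr (conj_weight KE2).
  rewrite (conj_weightV _ KE2) ?invr_neq0 // invrK !scalerBr !scalerA [q * _]mulrC.
  rewrite opprB addrA subrK -scalerBl -scaleN1r; congr (_ *: _).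
  by field; rewrite q_neq0 ?qq1_neq0.
rewrite /qcomm mulrN mulNr scalerN opprK -mulrA KiX -scalerAr scalerA mulfV // scale1r.
by rewrite !mulrA addrC -mulrBl -opprB XF1 opprK -mulrA KKi mulr1.
Qed.

Lemma qcomm_KE_qcomm (E1 F1 F2 : A) :
    K * F1 * Ki = (q ^+ 2)^-1 *: F1 -> K * F2 * Ki = q *: F2 ->
    E1 * F1 - F1 * E1 = (q - q^-1)^-1 *: (K - Ki) -> E1 * F2 - F2 * E1 = 0 ->
  qcomm q^-1 (- (K * E1)) (qcomm q^-1 F2 F1) = F2.
Proof.
move=> KF1 KF2 E1F1 E1F2; set Y := qcomm q^-1 F2 F1.
have KY : K * Y = q^-1 *: (Y * K).
  rewrite (weight_qcomm _ (conj_weight KF2) (conj_weight KF1)).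
  by congr (_ *: _); field; rewrite q_neq0.
have E1Y : E1 * Y - Y * E1 = - q^-1 *: (F2 * Ki).
  rewrite commutator_qcomm_r; last exact/subr0_eq.
  rewrite E1F1 /qcomm -scalerAl -scalerAr mulrBl mulrBr (conj_weight KF2).
  rewrite (conj_weightV q_neq0 KF2) !scalerBr !scalerA.
  have -> : q^-1 / (q - q^-1) * q = (q - q^-1)^-1.
    by field; rewrite q_neq0 ?qq1_neq0.
  rewrite opprB addrC addrA subrK -scalerBl; congr (_ *: _).
  by field; rewrite q_neq0 ?qq1_neq0.
rewrite /qcomm mulNr mulrN scalerN opprK [Y * (K * E1)]mulrA scalerAl -KY.
rewrite -!mulrA addrC -mulrBr -opprB E1Y scaleNr opprK -scalerAr mulrA KF2.
by rewrite scalerA mulVf // scale1r.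
Qed.

End SimpleRootIdentities.

Lemma adjacent_succ i : adjacent i i.+1.
Proof. by rewrite /adjacent eqxx orbT. Qed.

Lemma adjacent_pred i : adjacent i.+1 i.
Proof. by rewrite /adjacent eqxx. Qed.

Lemma cartan_diag i : cartan i i = 2%:Z.
Proof. by rewrite /cartan eqxx. Qed.

Lemma cartan_adjacent i j : adjacent i j -> cartan i j = - 1%:Z.
Proof.
move=> adj; rewrite /cartan -/(adjacent i j) adj.
by have -> : (i == j) = false by move: adj; rewrite /adjacent; lia.
Qed.

Section UqRootVectors.

Variables (F : fieldType) (A : algType F) (n : nat) (q : F).
Variables (e f k kinv : nat -> A) (T : nat -> {lrmorphism A -> A}).
Hypotheses (q_neq0 : q != 0) (q2_neq1 : q ^+ 2 != 1).
Hypotheses (hrel : Uq_relations n q e f k kinv) (hT : Lusztig_T n q e f k kinv T).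

Lemma e_comm_distant i j :
  in_range n i -> in_range n j -> distant i j -> GRing.comm (e i) (e j).
Proof. by move=> ri rj dij; have [_ [_ _ _ _ /(_ dij) []]] := hrel ri rj. Qed.

Lemma f_comm_distant i j :
  in_range n i -> in_range n j -> distant i j -> GRing.comm (f i) (f j).
Proof. by move=> ri rj dij; have [_ [_ _ _ _ /(_ dij) []]] := hrel ri rj. Qed.

Lemma T_e_distant b a :
  in_range n b -> in_range n a -> distant b a -> T b (e a) = e a.
Proof. by move=> rb ra dba; have [_ _ /(_ dba) []] := hT rb ra. Qed.

Lemma T_f_distant b a :
  in_range n b -> in_range n a -> distant b a -> T b (f a) = f a.
Proof. by move=> rb ra dba; have [_ _ /(_ dba) []] := hT rb ra. Qed.

Lemma T_e_adjacent b a :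
  in_range n b -> in_range n a -> adjacent b a -> T b (e a) = qcomm q (e b) (e a).
Proof. by move=> rb ra aba; have [_ /(_ aba) [] ] := hT rb ra. Qed.

Lemma T_f_adjacent b a :
  in_range n b -> in_range n a -> adjacent b a -> T b (f a) = qcomm q^-1 (f a) (f b).
Proof. by move=> rb ra aba; have [_ /(_ aba) [] ] := hT rb ra. Qed.

Lemma T_T_e a : in_range n a -> in_range n a.+1 -> T a (T a.+1 (e a)) = e a.+1.
Proof.
move=> ra rb; rewrite T_e_adjacent ?adjacent_pred // rmorph_qcomm.
rewrite [T a (e a.+1)]T_e_adjacent ?adjacent_succ //.
have [/(_ erefl) [-> _ _] _ _] := hT ra ra.
have [[KKi KiK _] [Ke _ ef _ _]] := hrel ra ra.
have [_ [Ke' _ _ _ _]] := hrel ra rb.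
have [_ [_ _ ef' _ _]] := hrel rb ra.
rewrite cartan_diag in Ke; rewrite cartan_adjacent ?adjacent_succ // in Ke'.
rewrite eqxx in ef; rewrite gtn_eqF // in ef'.
(* [q ^ 2%:Z] and [q ^ (- 1%:Z)] compute to [q ^+ 2] and [q^-1]. *)
exact: (qcomm_qcomm_FKi q_neq0 q2_neq1 KKi KiK Ke Ke' ef ef').
Qed.

Lemma T_T_f a : in_range n a -> in_range n a.+1 -> T a (T a.+1 (f a)) = f a.+1.
Proof.
move=> ra rb; rewrite T_f_adjacent ?adjacent_pred // rmorph_qcomm.
rewrite [T a (f a.+1)]T_f_adjacent ?adjacent_succ //.
have [/(_ erefl) [_ _ ->] _ _] := hT ra ra.
have [[_ KiK _] [_ Kf ef _ _]] := hrel ra ra.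
have [_ [_ Kf' ef' _ _]] := hrel ra rb.
rewrite cartan_diag in Kf; rewrite cartan_adjacent ?adjacent_succ // in Kf'.
rewrite eqxx in ef; rewrite ltn_eqF // in ef'.
exact: (qcomm_KE_qcomm q_neq0 q2_neq1 KiK Kf Kf' ef ef').
Qed.

Lemma Eroot_lt i j : (1 <= i)%N -> (i < j)%N -> (j <= n)%N ->
  Eroot n e f T i j = nest (qcomm q) e i (j - i - 1).
Proof.
move=> i1 ij jn; rewrite /Eroot ij.
have T_e_succ a :
    in_range n a -> in_range n a.+1 -> T a (e a.+1) = qcomm q (e a) (e a.+1).
  by move=> ra ra1; rewrite T_e_adjacent ?adjacent_succ.
exact: (Tword_word_w (qcommA q) (comm_qcomm q) (fun b => rmorph_qcomm (T b) q)
          e_comm_distant T_e_distant T_e_succ T_T_e i1 ij jn).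
Qed.

Lemma Eroot_gt i j : (1 <= j)%N -> (j < i)%N -> (i <= n)%N ->
  Eroot n e f T i j = nest (fun x y => qcomm q^-1 y x) f j (i - j - 1).
Proof.
move=> j1 ji i_n; rewrite /Eroot ltnNge (ltnW ji) /=.
have brA (x y z : A) : GRing.comm x z ->
    qcomm q^-1 z (qcomm q^-1 y x) = qcomm q^-1 (qcomm q^-1 z y) x.
  by move=> xz; rewrite qcommA.
have comm_br (x y z : A) :
    GRing.comm x y -> GRing.comm x z -> GRing.comm x (qcomm q^-1 z y).
  by move=> xy xz; apply: comm_qcomm.
have T_br b : {morph T b : x y / qcomm q^-1 y x}.
  by move=> x y; rewrite rmorph_qcomm.
have T_f_succ a :
    in_range n a -> in_range n a.+1 -> T a (f a.+1) = qcomm q^-1 (f a.+1) (f a).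
  by move=> ra ra1; rewrite T_f_adjacent ?adjacent_succ.
exact: (Tword_word_w (br := fun x y => qcomm q^-1 y x) brA comm_br T_br
          f_comm_distant T_f_distant T_f_succ T_T_f j1 ji i_n).
Qed.

Lemma Eroot_succ i : in_range n i -> Eroot n e f T i i.+1 = e i.
Proof. by case/andP=> i1 iN; rewrite Eroot_lt ?subSnn ?subnn //; lia. Qed.

Lemma Eroot_pred i : in_range n i -> Eroot n e f T i.+1 i = f i.
Proof. by case/andP=> i1 iN; rewrite Eroot_gt ?subSnn ?subnn //; lia. Qed.

Lemma Eroot_qcomm_lt i m j : (1 <= i)%N -> (i < m)%N -> (m < j)%N -> (j <= n)%N ->
  Eroot n e f T i j = qcomm q (Eroot n e f T i m) (Eroot n e f T m j).
Proof.
move=> i1 im mj jn; rewrite !Eroot_lt; try lia.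
have -> : (j - i - 1 = (m - i - 1 + (j - m - 1)).+1)%N by lia.
rewrite (nest_split (qcommA q) (comm_qcomm q)) => [|a b ia ab bj].
  by have -> : (i + (m - i - 1)).+1 = m by lia.
by apply: e_comm_distant; rewrite /in_range /distant; lia.
Qed.

Lemma Eroot_qcomm_gt i m j : (1 <= j)%N -> (j < m)%N -> (m < i)%N -> (i <= n)%N ->
  Eroot n e f T i j = qcomm q^-1 (Eroot n e f T i m) (Eroot n e f T m j).
Proof.
move=> j1 jm mi i_n; rewrite !Eroot_gt; try lia.
have -> : (i - j - 1 = (m - j - 1 + (i - m - 1)).+1)%N by lia.
rewrite (@nest_split _ (fun x y => qcomm q^-1 y x))
  => [|x y z xz|x y z xy xz|a b ja ab bi].
- by have -> : (j + (m - j - 1)).+1 = m by lia.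
- by rewrite qcommA.
- exact: comm_qcomm.
by apply: f_comm_distant; rewrite /in_range /distant; lia.
Qed.

End UqRootVectors.

Theorem proposition3p1 (R : realType) (n : nat) (q : R[i])
    (hq0 : q != 0) (hq1 : q != 1) (hqm1 : q != -1)
    (A : algType R[i]) (e f k kinv : nat -> A) (T : nat -> {lrmorphism A -> A})
    (hrel : Uq_relations n q e f k kinv) (hT : Lusztig_T n q e f k kinv T) :
  (forall i, in_range n i ->
     Eroot n e f T i i.+1 = e i /\ Eroot n e f T i.+1 i = f i) /\
  (forall i k0 j, (1 <= i)%N -> (i < k0)%N -> (k0 < j)%N -> (j <= n)%N ->
     Eroot n e f T i j =
       Eroot n e f T i k0 * Eroot n e f T k0 j - q *: (Eroot n e f T k0 j * Eroot n e f T i k0)) /\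
  (forall i k0 j, (1 <= j)%N -> (j < k0)%N -> (k0 < i)%N -> (i <= n)%N ->
     Eroot n e f T i j =
       Eroot n e f T i k0 * Eroot n e f T k0 j - q^-1 *: (Eroot n e f T k0 j * Eroot n e f T i k0)).
Proof.
have q2_neq1 : q ^+ 2 != 1 by rewrite sqrf_eq1 negb_or hq1 hqm1.
split; [|split].
- by move=> i ri; rewrite (Eroot_succ hq0 q2_neq1 hrel hT ri)
                          (Eroot_pred hq0 q2_neq1 hrel hT ri).
- exact: Eroot_qcomm_lt hq0 q2_neq1 hrel hT.
- exact: Eroot_qcomm_gt hq0 q2_neq1 hrel hT.
Qed.
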